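(* Let $n\ge0$ and $l\ge0$. In $H^*(\operatorname{Gr}_2(\mathbb{R}^{2^{n+1}+1+2l});\mathbb{Z}/2)$, $$Q_n(w_2^{2l+1}) = w_1^{2l+2}\bar w_{2^{n+1}-1+2l}.$$
   Context: $H^*(\operatorname{Gr}_2(\mathbb{R}^m);\mathbb{Z}/2)=\mathbb{Z}/2[w_1,w_2]/(\bar w_k : k\ge m-1)$, where $w_1,w_2$ are Stiefel–Whitney classes of the tautological bundle and $\bar w_k$ are defined by $(1+w_1+w_2)(1+\bar w_1+\bar w_2+\cdots)=1$. $Q_n$ is the Milnor primitive: $Q_0=Sq^1$, $Q_n=[Q_{n-1},Sq^{2^n}]$. *)

From HB Require Import structures.
From mathcomp Require Import all_boot all_algebra.
From mathcomp Require Import mpoly.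
Set Implicit Arguments. Unset Strict Implicit. Unset Printing Implicit Defensive.
Import GRing.Theory.
Local Open Scope ring_scope.

(* H^*(BO(2);Z/2) = F_2[w1,w2], modelled as {mpoly 'F_2[2]}:
   'X_0 = w1 (degree 1), 'X_1 = w2 (degree 2). *)
Notation F2 := 'F_2.
Notation P := {mpoly F2[2]}.

Definition w1 : P := 'X_(@Ordinal 2 0 erefl).
Definition w2 : P := 'X_(@Ordinal 2 1 erefl).

Definition wdeg (m : 'X_{1..2}) : nat := (m (@Ordinal 2 0 erefl) + 2 * m (@Ordinal 2 1 erefl))%N.

Definition hcomp (d : nat) (p : P) : P :=
  \sum_(m <- msupp p | wdeg m == d) p@_m *: 'X_[m].

(* total Steenrod square: the ring map determined by the Wu formula
   Sq(w1) = w1 + w1^2,  Sq(w2) = w2 + w1 w2 + w2^2 *)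
Definition Sq_total (p : P) : P :=
  comp_mpoly [tuple of [:: w1 + w1 ^+ 2; w2 + w1 * w2 + w2 ^+ 2]] p.

Definition Sq (i : nat) (p : P) : P :=
  \sum_(m <- msupp p) p@_m *: hcomp (wdeg m + i) (Sq_total 'X_[m]).

Fixpoint Q (n : nat) (p : P) : P :=
  match n with
  | 0 => Sq 1 p
  | k.+1 => Q k (Sq (2 ^ k.+1) p) - Sq (2 ^ k.+1) (Q k p)
  end.

(* dual classes: (1 + w1 + w2)(1 + wbar_1 + wbar_2 + ...) = 1, i.e.
   wbar_0 = 1, wbar_k = -(w1 wbar_{k-1} + w2 wbar_{k-2}) *)
Fixpoint wbar_pair (k : nat) : P * P :=  (* (wbar_k, wbar_{k-1}) with wbar_{-1} = 0 *)
  match k with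
  | 0 => (1, 0)
  | k'.+1 => let '(a, b) := wbar_pair k' in (- (w1 * a + w2 * b), a)
  end.
Definition wbar (k : nat) : P := (wbar_pair k).1.

Definition in_Gr_ideal (m : nat) (p : P) : Prop :=
  exists s : seq (P * nat),
    all (fun c => (m - 1 <= c.2)%N) s /\
    p = \sum_(c <- s) c.1 * wbar c.2.

(* equality in H^*(Gr_2(R^m);Z/2) = F_2[w1,w2]/(wbar_k : k >= m-1) *)
Definition eq_in_Gr2 (m : nat) (p q : P) : Prop := in_Gr_ideal m (p - q).

(* The splitting principle embeds F_2[w1,w2] into F_2[x0,x1] by w1 = x0 + x1,
   w2 = x0 x1, compatibly with the Steenrod squares when Sq(x) = x + x^2.  On a
   polynomial ring, Q_n is the derivation with Q_n(x) = x^(2^(n+1)): by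
   induction on n, using that a derivation Q_n with this value on generators
   commutes with Sq^j for j < 2^(n+1), so that the Cartan formula turns
   [Q_n, Sq^(2^(n+1))] into a derivation again.  As Q_n kills squares,
   Q_n(w2^(2l+1)) = w2^(2l) (x0^K x1 + x0 x1^K) with K = 2^(n+1), and since
   (x0 + x1) wbar_k = x0^(k+1) + x1^(k+1) this is w1 w2^(2l+1) wbar_(K-2).
   Finally, in the quotient by (wbar_k : k >= m - 1), the recursion
   w2 wbar_a = wbar_(a+2) + w1 wbar_(a+1) gives w2^j wbar_a = w1^j wbar_(a+j)
   as soon as a + j >= m - 2. *)

From HB Require Import structures.
From mathcomp Require Import all_boot all_algebra.
From mathcomp Require Import mpoly.
From mathcomp Require Import ring zify.
Import GRing.Theory.
Local Open Scope ring_scope.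

Lemma pchar2_mpoly (k : nat) : 2 \in [pchar {mpoly F2[k]}].
Proof. by apply: (rmorph_pchar (@mpolyC k F2)); apply: pchar_Fp. Qed.

Lemma pchar2_poly (R : nzRingType) : 2 \in [pchar R] -> 2 \in [pchar {poly R}].
Proof. exact: (rmorph_pchar polyC). Qed.

Lemma exprD_pchar2_exp2 (R : comNzRingType) (a b : R) r : 2 \in [pchar R] ->
  (a + b) ^+ (2 ^ r) = a ^+ (2 ^ r) + b ^+ (2 ^ r).
Proof. by move=> R2; apply: exprDn_pchar; rewrite pnatX pnatE //= R2. Qed.

Lemma exp2S_gt1 n : (1 < 2 ^ n.+1)%N.
Proof. by rewrite -{1}(expn0 2) ltn_exp2l. Qed.

Definition derivation {R : nzRingType} (D : R -> R) :=
  forall p q, D (p * q) = D p * q + p * D q.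

Lemma derivation_pchar2_odd_exp {R : comNzRingType} {D : R -> R} (f : R) l :
  2 \in [pchar R] -> derivation D -> D (f ^+ (2 * l + 1)) = f ^+ (2 * l) * D f.
Proof.
move=> R2 dD.
have D1 : D 1 = 0 by rewrite -(addrr_pchar2 R2 (D 1)) -{1}[1]mulr1 dD mulr1 mul1r.
have Dsq : D (f ^+ 2) = 0 by rewrite expr2 dD mulrC addrr_pchar2.
have Deven : D (f ^+ (2 * l)) = 0.
  rewrite exprM; elim: l => [|l IH]; first by rewrite expr0.
  by rewrite exprS dD Dsq IH mul0r mulr0 addr0.
by rewrite addn1 exprSr dD Deven mul0r add0r.
Qed.

Lemma power_sum_rec (R : comNzRingType) (X Y : R) (u : nat -> R) :
  2 \in [pchar R] -> u 0 = 1 -> u 1 = - (X + Y) ->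
  (forall j, u j.+2 = - ((X + Y) * u j.+1 + X * Y * u j)) ->
  forall j, (X + Y) * u j = X ^+ j.+1 + Y ^+ j.+1.
Proof.
move=> R2 u0 u1 uSS.
suff: forall j, (X + Y) * u j = X ^+ j.+1 + Y ^+ j.+1 /\
               (X + Y) * u j.+1 = X ^+ j.+2 + Y ^+ j.+2 by move=> h j; case: (h j).
elim=> [|j [IH1 IH2]].
  rewrite u0 u1 mulr1 mulrN (oppr_pchar2 R2) !expr1; split=> //.
  by rewrite -expr2 sqrrD (mulrn_pchar R2) addr0.
split=> //; rewrite uSS mulrN (oppr_pchar2 R2) mulrDr mulrCA IH2 mulrCA IH1.
transitivity (X ^+ j.+3 + Y ^+ j.+3 + 2%:R * (X * Y * (X ^+ j.+1 + Y ^+ j.+1))).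
  by rewrite !exprS; ring.
by rewrite (pcharf0 R2) mul0r addr0.
Qed.

Lemma mpoly_ring_ind (n : nat) (R : nzRingType) (G : {mpoly R[n]} -> Prop) :
    (forall c, G c%:MP) -> (forall i, G 'X_i) ->
    (forall p q, G p -> G q -> G (p + q)) ->
    (forall p q, G p -> G q -> G (p * q)) ->
  forall p, G p.
Proof.
move=> GC GX GD GM.
have G1 : G 1 by rewrite -mpolyC1.
have GXm m : G 'X_[m].
  rewrite mpolyXE_id; apply: big_ind => [|x y|i _]; [exact: G1 | exact: GM |].
  by elim: (m i) => [|e IH]; rewrite ?expr0 // exprS; apply: GM.
elim/mpolyind => [|c m p _ _ Gp]; first by rewrite -mpolyC0.
by apply: GD => //; rewrite -mul_mpolyC; apply: GM.
Qed.

Lemma mpoly_rmorph_ext (n : nat) (R S : nzRingType)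
    (g1 g2 : {rmorphism {mpoly R[n]} -> S}) :
  (forall c, g1 c%:MP = g2 c%:MP) -> (forall i, g1 'X_i = g2 'X_i) -> g1 =1 g2.
Proof.
move=> eqC eqX; apply: mpoly_ring_ind => // p q ep eq.
  by rewrite !rmorphD ep eq.
by rewrite !rmorphM ep eq.
Qed.

(* [Sqxt k p] is the total square [\sum_j Sq^j p * t^j] on [F_2[x_i : i < k]],
   with [t = 'X] and [Sq_t x_i = x_i + x_i^2 t]. *)
Definition Sqxt_var {k : nat} (i : 'I_k) : {poly {mpoly F2[k]}} :=
  ('X_i)%:P + ('X_i ^+ 2)%:P * 'X.
Local Notation Sqxt k := (mmap (polyC \o @mpolyC k F2) (@Sqxt_var k)).

(* Locked: unfolding [Sqx] during unification starts computing with concrete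
   polynomials. *)
HB.lock Definition Sqx {k : nat} (j : nat) (p : {mpoly F2[k]}) : {mpoly F2[k]} :=
  (Sqxt k p)`_j.

Section MilnorPrimitivesOnPolynomials.
Context {k : nat}.
Local Notation Px := {mpoly F2[k]}.
Implicit Types (p q : Px) (i : 'I_k).
Let Px2 : 2 \in [pchar Px] := pchar2_mpoly k.

Lemma SqxE j p : Sqx j p = (Sqxt k p)`_j.
Proof. by rewrite Sqx.unlock. Qed.

Lemma SqxD j p q : Sqx j (p + q) = Sqx j p + Sqx j q.
Proof. by rewrite !SqxE rmorphD coefD. Qed.

Lemma Sqx0 j : Sqx j (0 : Px) = 0.
Proof. by rewrite SqxE rmorph0 coef0. Qed.

Lemma Sqx_mul j p q : Sqx j (p * q) = \sum_(a < j.+1) Sqx a p * Sqx (j - a) q.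
Proof. by rewrite !SqxE rmorphM coefM; apply: eq_bigr => a _; rewrite !SqxE. Qed.

Lemma Sqxt_varE i : Sqxt k 'X_i = Sqxt_var i.
Proof. by rewrite mmapX mmap1U. Qed.

Lemma Sqx_zeroth p : Sqx 0 p = p.
Proof.
rewrite SqxE -horner_coef0.
apply: (@mpoly_rmorph_ext _ _ _ (horner_eval 0 \o Sqxt k) idfun) => [c|i] /=.
  by rewrite /horner_eval mmapC /= hornerC.
by rewrite /horner_eval Sqxt_varE /Sqxt_var !hornerE.
Qed.

Lemma SqxC j c : Sqx j (c%:MP : Px) = if j == 0%N then c%:MP else 0.
Proof. by rewrite SqxE mmapC /= coefC. Qed.

Lemma Sqx_X_exp2 j i r : Sqx j ('X_i ^+ (2 ^ r)) =
  if j == 0%N then 'X_i ^+ (2 ^ r)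
  else if j == (2 ^ r)%N then 'X_i ^+ (2 ^ r.+1) else 0.
Proof.
rewrite SqxE rmorphXn /= Sqxt_varE /Sqxt_var.
rewrite exprD_pchar2_exp2 ?pchar2_poly // exprMn -!rmorphXn /=.
rewrite coefD coefC coefCM coefXn -exprM -expnS.
have [->|j0] := eqVneq j 0%N; last by rewrite add0r; case: eqP; rewrite ?mulr1 ?mulr0.
by rewrite eq_sym eqn0Ngt expn_gt0 mulr0 addr0.
Qed.

Fixpoint Qx (n : nat) (p : Px) : Px :=
  match n with
  | 0 => Sqx 1 p
  | n.+1 => Qx n (Sqx (2 ^ n.+1) p) - Sqx (2 ^ n.+1) (Qx n p)
  end.

Lemma Sqx_X j i :
  Sqx j 'X_i = if j == 0%N then 'X_i else if j == 1%N then 'X_i ^+ 2 else 0.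
Proof. by have := Sqx_X_exp2 j i 0; rewrite expr1. Qed.

Lemma QxD n p q : Qx n (p + q) = Qx n p + Qx n q.
Proof.
elim: n p q => [|n IH] p q /=; first exact: SqxD.
by rewrite SqxD IH IH SqxD opprD addrACA.
Qed.

Lemma Qx0 n : Qx n (0 : Px) = 0.
Proof. by elim: n => [|n IH] /=; rewrite ?Sqx0 // IH Sqx0 subrr. Qed.

Lemma Qx_sum n m (F : 'I_m -> Px) :
  Qx n (\sum_(a < m) F a) = \sum_(a < m) Qx n (F a).
Proof. by elim/big_rec2: _ => [|a x y _ <-]; rewrite ?Qx0 ?QxD. Qed.

Lemma QxC n c : Qx n (c%:MP : Px) = 0.
Proof.
elim: n => [|n IH] /=; first by rewrite SqxC.
by rewrite IH Sqx0 SqxC expn_eq0 /= Qx0 subrr.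
Qed.

Lemma QxX n i : Qx n 'X_i = 'X_i ^+ (2 ^ n.+1).
Proof.
elim: n => [|n IH] /=; first by rewrite Sqx_X.
rewrite Sqx_X expn_eq0 (gtn_eqF (exp2S_gt1 n)) /= Qx0 IH.
by rewrite Sqx_X_exp2 expn_eq0 eqxx /= sub0r oppr_pchar2.
Qed.

Lemma Qx0_derivation : derivation (Qx 0).
Proof.
by move=> p q /=; rewrite Sqx_mul !big_ord_recr big_ord0 /= add0r !Sqx_zeroth addrC.
Qed.

Lemma Qx_Sqx_comm n : derivation (Qx n) ->
  forall j p, (j < 2 ^ n.+1)%N -> Qx n (Sqx j p) = Sqx j (Qx n p).
Proof.
move=> dQ j p; elim/mpoly_ring_ind: p j => [c|i|p q Hp Hq|p q Hp Hq] j jK.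
- by rewrite SqxC QxC Sqx0; case: ifP; rewrite ?QxC ?Qx0.
- rewrite Sqx_X QxX Sqx_X_exp2 (ltn_eqF jK).
  case: j jK => [|[|j]] _ /=; [exact: QxX | | by rewrite Qx0].
  by rewrite expr2 dQ mulrC addrr_pchar2.
- by rewrite SqxD !QxD SqxD Hp ?Hq.
rewrite Sqx_mul Qx_sum dQ SqxD !Sqx_mul -big_split /=.
apply: eq_bigr => a _; have aj := ltn_ord a.
have aK : (a < 2 ^ n.+1)%N by lia.
have jaK : (j - a < 2 ^ n.+1)%N by lia.
by rewrite dQ Hp // Hq.
Qed.

(* By the Cartan formula, [Q_n, Sq^K](p q) is the sum over a of
   [Q_n, Sq^a] p * Sq^(K-a) q + Sq^a p * [Q_n, Sq^(K-a)] q, where only a = K,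
   resp. a = 0, survives the commutation hypothesis. *)
Lemma QxS_derivation n : derivation (Qx n) ->
  (forall j p, (j < 2 ^ n.+1)%N -> Qx n (Sqx j p) = Sqx j (Qx n p)) ->
  derivation (Qx n.+1).
Proof.
move=> dQ comm p q /=; set K := (2 ^ n.+1)%N.
have Eleft : \sum_(a < K.+1) (Qx n (Sqx a p) - Sqx a (Qx n p)) * Sqx (K - a) q
    = (Qx n (Sqx K p) - Sqx K (Qx n p)) * q.
  rewrite big_ord_recr /= big1 ?add0r ?subnn ?Sqx_zeroth // => a _.
  by rewrite comm ?subrr ?mul0r.
have Eright : \sum_(a < K.+1) Sqx a p * (Qx n (Sqx (K - a) q) - Sqx (K - a) (Qx n q))
    = p * (Qx n (Sqx K q) - Sqx K (Qx n q)).
  rewrite big_ord_recl /= big1 ?addr0 ?subn0 ?Sqx_zeroth // => a _.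
  by rewrite comm ?subrr ?mulr0 //= /bump /=; have := ltn_ord a; lia.
rewrite Sqx_mul Qx_sum dQ SqxD !Sqx_mul -Eleft -Eright.
rewrite [X in X - _](eq_bigr _ (fun a _ => dQ _ _)) big_split /=.
rewrite !(eq_bigr _ (fun a _ => mulrBl _ _ _)) !(eq_bigr _ (fun a _ => mulrBr _ _ _)) /=.
by rewrite !sumrB; ring.
Qed.

Lemma Qx_derivation n : derivation (Qx n).
Proof.
elim: n => [|n IH]; first exact: Qx0_derivation.
exact: QxS_derivation _ IH (Qx_Sqx_comm _ IH).
Qed.

End MilnorPrimitivesOnPolynomials.

Lemma wdeg_mnmwgt (m : 'X_{1..2}) : wdeg m = mnmwgt m.
Proof.
rewrite /wdeg /mnmwgt big_ord_recr big_ord1 /= muln1 [(m ord_max * 2)%N]mulnC.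
by congr (m _ + 2 * m _)%N; apply/val_inj.
Qed.

Lemma hcomp_pihomog (d : nat) (p : P) : hcomp d p = pihomog mnmwgt d p.
Proof. by rewrite /hcomp pihomogE; apply: eq_bigl => m; rewrite wdeg_mnmwgt. Qed.

(* [F] is homogeneous of degree [e] once the variable [t] of [{poly P}] gets
   degree [-1], as the total square [\sum_i Sq^i p * t^i] of a class [p] of
   degree [e] is. *)
Definition thomog (e : nat) (F : {poly P}) :=
  forall j, F`_j \is [in F2[2], (e + j).-homog for mnmwgt].

Lemma thomogM e1 e2 F G : thomog e1 F -> thomog e2 G -> thomog (e1 + e2) (F * G).
Proof.
move=> hF hG j; rewrite coefM; apply: rpred_sum => k _.
have -> : (e1 + e2 + j = (e1 + k) + (e2 + (j - k)))%N by have := ltn_ord k; lia.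
exact: dhomogM.
Qed.

Lemma thomog1 : thomog 0 1.
Proof.
by move=> j; rewrite coef1; case: eqP => [->|_]; [apply: dhomog1 | apply: rpred0].
Qed.

Lemma thomogXn e F k : thomog e F -> thomog (e * k) (F ^+ k).
Proof.
move=> hF; elim: k => [|k IH]; first by rewrite muln0 expr0; apply: thomog1.
by rewrite exprS mulnS; apply: thomogM.
Qed.

Lemma pihomog_horner1 e F i : thomog e F -> pihomog mnmwgt (e + i) F.[1] = F`_i.
Proof.
move=> hF; rewrite horner_coef linear_sum /=.
under eq_bigr => j _ do rewrite expr1n mulr1.
have pi_ne j : i != j -> pihomog mnmwgt (e + i) F`_j = 0.
  by move=> ij; apply: (pihomog_ne0 _ (hF j)); rewrite eqn_add2l eq_sym.
case: (ltnP i (size F)) => hi.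
  rewrite (bigD1 (Ordinal hi)) //= pihomog_dE // big1 ?addr0 // => j ij.
  by apply: pi_ne; rewrite eq_sym -[i]/(val (Ordinal hi)) (inj_eq val_inj).
rewrite nth_default // big1 // => j _; apply: pi_ne.
by rewrite neq_ltn (leq_trans (ltn_ord j) hi) orbT.
Qed.

Lemma X_homog (i : 'I_2) : ('X_i : P) \is [in F2[2], (i.+1).-homog for mnmwgt].
Proof. by rewrite dhomogX /= mnmwgt1. Qed.

Definition Sqt_var (i : 'I_2) : {poly P} :=
  if val i == 0%N then w1%:P + (w1 ^+ 2)%:P * 'X
  else w2%:P + (w1 * w2)%:P * 'X + (w2 ^+ 2)%:P * 'X^2.
Local Notation Sqt := (mmap (polyC \o @mpolyC 2 F2) Sqt_var).

Lemma thomog_Sqt_var (i : 'I_2) : thomog i.+1 (Sqt_var i).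
Proof.
have hw1 : w1 \is [in F2[2], 1.-homog for mnmwgt] := X_homog _.
have hw2 : w2 \is [in F2[2], 2.-homog for mnmwgt] := X_homog _.
case: i => [[|[|i]] hi] // j.
all: rewrite /Sqt_var /= ?coefD coefC ?coefCM ?coefX ?coefXn.
  case: j => [|[|j]] /=; rewrite ?mulr0 ?mulr1 ?addr0 ?add0r //.
    exact: dhomogMn 2 hw1.
  exact: rpred0.
case: j => [|[|[|j]]] /=; rewrite ?mulr0 ?mulr1 ?addr0 ?add0r //.
- exact: dhomogM hw1 hw2.
- exact: dhomogMn 2 hw2.
- exact: rpred0.
Qed.

Lemma thomog_mmap1 m : thomog (mnmwgt m) (mmap1 Sqt_var m).
Proof.
apply: (big_ind2 thomog) => [|e1 F e2 G|i _]; [exact: thomog1 | exact: thomogM |].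
by rewrite mulnC; apply/thomogXn/thomog_Sqt_var.
Qed.

Lemma horner1_mmap1 m : (mmap1 Sqt_var m).[1] = Sq_total 'X_[m].
Proof.
rewrite /Sq_total comp_mpolyX /mmap1 horner_prod; apply: eq_bigr => i _.
rewrite horner_exp; congr (_ ^+ _).
by case: i => [[|[|i]] hi] //; rewrite /Sqt_var /= !hornerE (tnth_nth 0) /= ?mulr1.
Qed.

Lemma Sq_coef i p : Sq i p = (Sqt p)`_i.
Proof.
rewrite /Sq /mmap coef_sum; apply: eq_bigr => m _.
rewrite /= coefCM mul_mpolyC hcomp_pihomog -horner1_mmap1 wdeg_mnmwgt.
by rewrite (pihomog_horner1 _ _ _ (thomog_mmap1 m)).
Qed.

(* Expressing w1, w2 through the Chern roots x0, x1; injective by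
   [msym_fundamental_un]. *)
Local Notation to_roots := (comp_mpoly [tuple mesym 2 F2 i.+1 | i < 2]).
Local Notation x0 := ('X_(@Ordinal 2 0 erefl) : P).
Local Notation x1 := ('X_(@Ordinal 2 1 erefl) : P).

Lemma to_roots_w1 : to_roots w1 = x0 + x1.
Proof.
rewrite comp_mpolyXU -tnth_nth tnth_map tnth_ord_tuple mesym1E big_ord_recr big_ord1 /=.
by congr ('X__ + 'X__); apply: val_inj.
Qed.

Lemma to_roots_w2 : to_roots w2 = x0 * x1.
Proof.
rewrite comp_mpolyXU -tnth_nth tnth_map tnth_ord_tuple mesymnnE big_ord_recr big_ord1 /=.
by congr ('X__ * 'X__); apply: val_inj.
Qed.

Lemma map_to_roots_Sqt p : map_poly to_roots (Sqt p) = Sqxt 2 (to_roots p).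
Proof.
apply: (@mpoly_rmorph_ext _ _ _ (map_poly to_roots \o Sqt) (Sqxt 2 \o to_roots)).
  by move=> c /=; rewrite comp_mpolyC !mmapC /= map_polyC /= comp_mpolyC.
move=> i /=; rewrite mmapX mmap1U /Sqt_var.
case: i => [[|[|i]] hi] //=; rewrite (bool_irrelevance hi erefl).
  rewrite -/w1 to_roots_w1 (rmorphD (Sqxt 2)) /= !Sqxt_varE /Sqxt_var.
  rewrite (rmorphD (map_poly _)) (rmorphM (map_poly _)) /= !map_polyC map_polyX /=.
  by rewrite rmorphXn /= to_roots_w1 sqrrD (mulrn_pchar (pchar2_mpoly 2)) addr0; ring.
rewrite -/w2 to_roots_w2 (rmorphM (Sqxt 2)) /= !Sqxt_varE /Sqxt_var.
rewrite !(rmorphD (map_poly _)) !(rmorphM (map_poly _)) /= !map_polyC map_polyX /=.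
by rewrite !rmorphXn /= rmorphM /= to_roots_w1 to_roots_w2; ring.
Qed.

Lemma to_roots_Sq i p : to_roots (Sq i p) = Sqx i (to_roots p).
Proof. by rewrite Sq_coef SqxE -map_to_roots_Sqt coef_map. Qed.

Lemma to_roots_Q n p : to_roots (Q n p) = Qx n (to_roots p).
Proof.
elim: n p => [|n IH] p /=; first exact: to_roots_Sq.
by rewrite rmorphB /= IH to_roots_Sq to_roots_Sq IH.
Qed.

Lemma wbarSS k : wbar k.+2 = - (w1 * wbar k.+1 + w2 * wbar k).
Proof. by rewrite /wbar /=; case: (wbar_pair k). Qed.

Lemma w2_mul_wbar k : w2 * wbar k = wbar k.+2 + w1 * wbar k.+1.
Proof.
have P2 := pchar2_mpoly 2.
by rewrite wbarSS (oppr_pchar2 P2) addrC addrA (addrr_pchar2 P2) add0r.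
Qed.

Lemma wbar0 : wbar 0 = 1.
Proof. by []. Qed.

Lemma wbar1 : wbar 1 = - w1.
Proof. by rewrite /wbar /= mulr1 mulr0 addr0. Qed.

Lemma to_roots_wbar k : (x0 + x1) * to_roots (wbar k) = x0 ^+ k.+1 + x1 ^+ k.+1.
Proof.
apply: (@power_sum_rec _ _ _ (fun j => to_roots (wbar j))) => [|||j].
- exact: pchar2_mpoly.
- by rewrite wbar0 comp_mpoly1.
- by rewrite wbar1 comp_mpolyN to_roots_w1.
rewrite wbarSS comp_mpolyN comp_mpolyD !(rmorphM (comp_mpoly _)) /=.
by rewrite to_roots_w1 to_roots_w2.
Qed.

Lemma Q_w2_odd_exp n l :
  Q n (w2 ^+ (2 * l + 1)) = w1 * w2 ^+ (2 * l + 1) * wbar (2 ^ n.+1 - 2).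
Proof.
have [K EK] : exists K, (2 ^ n.+1)%N = K.+2.
  by exists (2 ^ n.+1 - 2)%N; have := exp2S_gt1 n; lia.
apply: msym_fundamental_un; rewrite to_roots_Q rmorphXn /= to_roots_w2.
rewrite (derivation_pchar2_odd_exp _ _ (pchar2_mpoly 2) (Qx_derivation n)).
rewrite Qx_derivation !QxX !(rmorphM (comp_mpoly _)) rmorphXn /= to_roots_w1 to_roots_w2.
rewrite EK !subSS subn0 [in RHS]mulrAC to_roots_wbar.
by rewrite addn1 !exprS; ring.
Qed.

Section GrassmannianIdeal.
Variable M : nat.
Local Notation I := (in_Gr_ideal M).

Lemma in_Gr_ideal0 : I 0.
Proof. by exists [::]; rewrite big_nil. Qed.

Lemma in_Gr_idealD a b : I a -> I b -> I (a + b).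
Proof.
move=> [s [s_gen ->]] [t [t_gen ->]]; exists (s ++ t).
by rewrite all_cat s_gen t_gen big_cat.
Qed.

Lemma in_Gr_idealMl r a : I a -> I (r * a).
Proof.
move=> [s [s_gen ->]]; exists [seq (r * c.1, c.2) | c <- s].
split; first by rewrite all_map.
by rewrite big_map mulr_sumr; apply: eq_bigr => c _; rewrite mulrA.
Qed.

Lemma in_Gr_ideal_wbar k : (M - 1 <= k)%N -> I (wbar k).
Proof. by move=> kM; exists [:: (1, k)]; rewrite /= kM big_seq1 mul1r. Qed.

Lemma in_Gr_ideal_w2_exp_wbar j a : (M - 1 <= a + j)%N -> I (w2 ^+ j * wbar a).
Proof.
elim: j a => [|j IH] a ajM.
  by rewrite mul1r; apply: in_Gr_ideal_wbar; rewrite -(addn0 a).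
rewrite exprSr -mulrA w2_mul_wbar mulrDr mulrCA.
by apply: in_Gr_idealD; [|apply: in_Gr_idealMl]; apply: IH; lia.
Qed.

Lemma eq_in_Gr2_w2_exp_wbar j a : (M - 2 <= a + j)%N ->
  eq_in_Gr2 M (w2 ^+ j * wbar a) (w1 ^+ j * wbar (a + j)).
Proof.
rewrite /eq_in_Gr2; elim: j a => [|j IH] a ajM.
  by rewrite !mul1r addn0 subrr; apply: in_Gr_ideal0.
rewrite exprSr -mulrA w2_mul_wbar mulrDr mulrCA exprS -mulrA -addrA -mulrBr -addSnnS.
by apply: in_Gr_idealD; [apply: in_Gr_ideal_w2_exp_wbar | apply/in_Gr_idealMl/IH]; lia.
Qed.

End GrassmannianIdeal.

Theorem proposition5p8 (n l : nat) :
  eq_in_Gr2 (2 ^ n.+1 + 1 + 2 * l)%N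
    (Q n (w2 ^+ (2 * l + 1)))
    (w1 ^+ (2 * l + 2) * wbar (2 ^ n.+1 - 1 + 2 * l)).
Proof.
have K_gt1 := exp2S_gt1 n.
rewrite /eq_in_Gr2 Q_w2_odd_exp -mulrA [(2 * l + 2)%N]addnS exprS -mulrA -mulrBr.
apply: in_Gr_idealMl.
have -> : (2 ^ n.+1 - 1 + 2 * l = 2 ^ n.+1 - 2 + (2 * l + 1))%N by lia.
by apply: (eq_in_Gr2_w2_exp_wbar _ (2 * l + 1) (2 ^ n.+1 - 2)); lia.
Qed.
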